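(* Let $n\ge2$, $m\ge1$. Let $H_C$ be any Hermitian operator on the $mn$ qubits that is diagonal in the computational basis, and let $U_C(\gamma)=e^{-i\gamma H_C}$. Let $U_M(\beta)=\bigotimes_{b=0}^{m-1}e^{-i\beta H_M^{(b)}}$ where $H_M^{(b)}=\sum_{0\le i<j\le n-1}(X_i^{(b)}X_j^{(b)}+Y_i^{(b)}Y_j^{(b)})$ acts on block $b$. Let $|s_0\rangle=|W_n\rangle^{\otimes m}$ with $|W_n\rangle=\frac1{\sqrt n}\sum_{k=0}^{n-1}|e_k\rangle$. Then for every product basis vector $|x^\star\rangle\in\mathcal H_{\mathrm{OH}}$ and every $(\gamma,\beta)\in\mathbb R^2$ there exists a blockwise permutation $\mathsf P^\star=\bigotimes_{b=0}^{m-1}\mathsf P_b$ such that $$\bigl|\langle x^\star|\mathsf P^{\star\dagger}U_M(\beta)U_C(\gamma)|s_0\rangle\bigr|^2\ \ge\ \frac{1}{n^m}.$$ In particular this holds when $x^\star$ is a feasible optimal label and $(\gamma,\beta)$ ranges over the grid $\{j\pi/n: j=0,\dots,n\}^2$.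
   Context: A block is a register of $n$ qubits; $|e_k\rangle$ denotes the $n$-qubit basis state with qubit $k$ in $|1\rangle$ and all others in $|0\rangle$, $\mathcal H_1=\mathrm{span}\{|e_0\rangle,\dots,|e_{n-1}\rangle\}$, and $\mathcal H_{\mathrm{OH}}=\mathcal H_1^{\otimes m}$ (dimension $n^m$) with product basis $|x\rangle=|e_{j_0}\rangle\otimes\cdots\otimes|e_{j_{m-1}}\rangle$, $x\in\{0,\dots,n-1\}^m$. $X_i^{(b)},Y_i^{(b)}$ are Pauli operators on qubit $i$ of block $b$. Both $U_C(\gamma)$ and $U_M(\beta)$ map $\mathcal H_{\mathrm{OH}}$ to itself. A blockwise permutation is $\mathsf P=\bigotimes_b\mathsf P_b$ with $\mathsf P_b|e_j\rangle=|e_{\pi_b(j)}\rangle$ for permutations $\pi_b$ of $\{0,\dots,n-1\}$. *)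

From HB Require Import structures.
From mathcomp Require Import all_boot all_order all_algebra all_fingroup.
From mathcomp Require Import all_classical all_reals all_analysis.
From mathcomp Require Import complex.
Set Implicit Arguments. Unset Strict Implicit. Unset Printing Implicit Defensive.
Import Order.TTheory GRing.Theory Num.Theory.
Import numFieldNormedType.Exports.
Local Open Scope ring_scope.

Section QAOA.
Variable R : realType.
Definition C : numClosedFieldType := R[i].
Definition iC : C := Complex 0 1.
Definition rC (x : R) : C := Complex x 0.
Definition cconj (z : C) : C := conjc z.

(* Operators on the Hilbert space C^T spanned by the computational basis
   states indexed by a finite type T: A z' z = <z'|A|z>.  Vectors: T -> C. *)
Definition op (T : finType) := T -> T -> C.
Definition vec (T : finType) := T -> C.

Definition opmul (T : finType) (A B : op T) : op T :=
  fun z z' => \sum_(y : T) A z y * B y z'.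
Definition opid (T : finType) : op T := fun z z' => (z == z')%:R.
Definition oppow (T : finType) (A : op T) (k : nat) : op T :=
  iter k (opmul A) (@opid T).
Definition opscale (T : finType) (c : C) (A : op T) : op T :=
  fun z z' => c * A z z'.
Definition opadj (T : finType) (A : op T) : op T := fun z z' => cconj (A z' z).
Definition opapp (T : finType) (A : op T) (v : vec T) : vec T :=
  fun z => \sum_(z' : T) A z z' * v z'.
Definition inner (T : finType) (u v : vec T) : C := \sum_(z : T) cconj (u z) * v z.

Definition expop (T : finType) (A : op T) : op T :=
  fun z z' => limn (fun N : nat => \sum_(k < N) (k`!%:R)^-1 * oppow A k z z').

(* computational basis of a block of n qubits and of m blocks *)
Definition Qb (n : nat) := {ffun 'I_n -> bool}.
Definition Q (m n : nat) := {ffun 'I_m -> Qb n}.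

(* single-qubit Pauli matrices, sigma out in = <out|sigma|in>, |0> = false *)
Definition sigX (a b : bool) : C := (a != b)%:R.
Definition sigY (a b : bool) : C :=
  if a == b then 0 else if a then iC else - iC.

Definition onqubit (n : nat) (i : 'I_n) (s : bool -> bool -> C) : op (Qb n) :=
  fun z' z => (\prod_(j < n | j != i) (z' j == z j)%:R) * s (z' i) (z i).

Definition HM (n : nat) : op (Qb n) :=
  fun z' z => \sum_(i < n) \sum_(j < n | (i < j)%N)
     (opmul (onqubit i sigX) (onqubit j sigX) z' z +
      opmul (onqubit i sigY) (onqubit j sigY) z' z).

Definition tensop (m n : nat) (A : 'I_m -> op (Qb n)) : op (Q m n) :=
  fun z' z => \prod_(b < m) A b (z' b) (z b).
Definition tensvec (m n : nat) (v : 'I_m -> vec (Qb n)) : vec (Q m n) :=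
  fun z => \prod_(b < m) v b (z b).

Definition UC (m n : nat) (HC : op (Q m n)) (gamma : R) : op (Q m n) :=
  expop (opscale (- iC * rC gamma) HC).
Definition UM (m n : nat) (beta : R) : op (Q m n) :=
  tensop (fun _ : 'I_m => expop (opscale (- iC * rC beta) (@HM n))).

Definition ek (n : nat) (k : 'I_n) : Qb n := [ffun i => i == k].
Definition ket (T : finType) (z : T) : vec T := fun z' => (z' == z)%:R.

Definition Wn (n : nat) : vec (Qb n) :=
  fun z => rC ((Num.sqrt (n%:R : R))^-1) * \sum_(k < n) ket (ek k) z.
Definition s0 (m n : nat) : vec (Q m n) := tensvec (fun _ : 'I_m => @Wn n).

Definition prodbasis (m n : nat) (x : 'I_m -> 'I_n) : vec (Q m n) :=
  tensvec (fun b => ket (ek (x b))).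

(* qubit permutation of a block by pi: P|z> = |z o pi^-1>, so P|e_j> = |e_{pi j}> *)
Definition permop (n : nat) (pi : {perm 'I_n}) : op (Qb n) :=
  fun z' z => ([ffun j => z' (pi j)] == z)%:R.
Definition blockperm (m n : nat) (pi : 'I_m -> {perm 'I_n}) : op (Q m n) :=
  tensop (fun b => permop (pi b)).

Definition diagonal_op (T : finType) (H : op T) : Prop :=
  forall z z', z != z' -> H z z' = 0.
Definition hermitian_op (T : finType) (H : op T) : Prop :=
  forall z z', H z' z = cconj (H z z').

End QAOA.

From HB Require Import structures.
From mathcomp Require Import all_boot all_order all_algebra all_fingroup.
From mathcomp Require Import all_classical all_reals all_analysis.
From mathcomp Require Import complex.
From mathcomp Require Import ring lra.

(* U_C(gamma) is a diagonal phase, and every mixer factor preserves span(e_0, ..., e_(n-1)),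
   on which H_M = 2(J - 1) has eigenvalue 2(n-1) on W_n and -2 on its orthogonal complement.
   So the amplitudes of U_M(beta) U_C(gamma) |s_0> on the product basis are a tensor product
   of unitary n x n matrices applied to a vector whose n^m entries all have modulus n^(-m/2).
   These squared amplitudes sum to 1, hence some label y carries weight at least n^(-m), and
   the blockwise transpositions (x*_b y_b) move that weight onto x*. *)

Set Implicit Arguments. Unset Strict Implicit. Unset Printing Implicit Defensive.
Import Order.TTheory GRing.Theory Num.Theory.
Import numFieldNormedType.Exports.
Local Open Scope ring_scope.
Local Open Scope complex_scope.
Local Open Scope classical_set_scope.

Section ComplexExponential.
Variable R : realType.
Local Notation CC := (C R).

Definition expser (w : CC) (N : nat) : CC := \sum_(k < N) (k`!%:R)^-1 * w ^+ k.

Definition expi (t : R) : CC := Complex (cos t) (sin t).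

Lemma iC_sqr : iC R ^+ 2 = -1.
Proof.
rewrite expr2; apply/eqP.
by rewrite eq_complex /= !(mul0r, mulr1, mulr0, add0r, sub0r, oppr0) !eqxx.
Qed.

Lemma rCE (x : R) : rC x = x%:C. Proof. by []. Qed.

Lemma exp_term_iC (t : R) k :
  (k`!%:R)^-1 * (iC R * rC t) ^+ k = Complex (cos_coeff t k) (sin_coeff t k).
Proof.
have natC j : (j%:R : CC) = (j%:R : R)%:C by rewrite rmorph_nat.
have N1C : (-1 : CC) = (-1 : R)%:C by rewrite rmorphN1.
have [j [->|->]] : exists j, k = j.*2 \/ k = j.*2.+1.
  by exists k./2; rewrite -{1 3}(odd_double_half k); case: (odd k); [right|left].
- rewrite /cos_coeff /sin_coeff /= odd_double doubleK /= exprMn -mul2n exprM iC_sqr.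
  rewrite N1C natC rCE -fmorphV -!rmorphXn -!rmorphM; apply/eqP; rewrite eq_complex /=.
  by rewrite !mul0r eqxx andbT -exprnP; apply/eqP; ring.
- rewrite /cos_coeff /sin_coeff /= odd_double /= exprS exprMn -mul2n exprM iC_sqr.
  rewrite N1C natC rCE -fmorphV -!rmorphXn -!rmorphM mulrCA.
  apply/eqP; rewrite eq_complex /= mul2n doubleK exprS.
  by apply/andP; split; apply/eqP; ring.
Qed.

Lemma expser_iC (t : R) N :
  expser (iC R * rC t) N = Complex (series (cos_coeff t) N) (series (sin_coeff t) N).
Proof.
rewrite /expser; under eq_bigr do rewrite exp_term_iC.
rewrite /series /= !big_mkord; elim: N => [|N IH]; first by rewrite !big_ord0.
by rewrite !big_ord_recr /= IH.
Qed.

Lemma normc_le_ReIm (z : CC) : `|z| <= (`|complex.Re z| + `|complex.Im z|)%:C.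
Proof.
rewrite normc_def lecR.
have h0 : 0 <= `|complex.Re z| + `|complex.Im z| by rewrite addr_ge0.
rewrite -(ger0_norm h0) -(sqrtr_sqr (`|complex.Re z| + `|complex.Im z|)).
apply: ler_wsqrtr; rewrite -[complex.Re z ^+ 2](real_normK (num_real _)).
rewrite -[complex.Im z ^+ 2](real_normK (num_real _)).
by have := normr_ge0 (complex.Re z); have := normr_ge0 (complex.Im z); nra.
Qed.

Lemma cvg_complex (f : nat -> CC) (a b : R) :
  (fun N => complex.Re (f N)) @ \oo --> a -> (fun N => complex.Im (f N)) @ \oo --> b ->
  f @ \oo --> (Complex a b : CC).
Proof.
move=> fa fb; apply/cvgrPdist_lt => e; rewrite ltcE /= => /andP[/eqP Ime e0].
have -> : e = (complex.Re e)%:C by case: e Ime {e0} => ? ? /= ->.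
move: (complex.Re e) e0 => e' e0; have e2 : 0 < e' / 2 by rewrite divr_gt0.
move: fa fb => /cvgrPdist_lt/(_ _ e2) fa /cvgrPdist_lt/(_ _ e2) fb.
near=> N; apply: le_lt_trans (normc_le_ReIm _) _.
have ha : `|a - complex.Re (f N)| < e' / 2 by near: N.
have hb : `|b - complex.Im (f N)| < e' / 2 by near: N.
by rewrite ltcR; case: (f N) ha hb => x y /= ha hb; rewrite (splitr e') ltrD.
Unshelve. all: by end_near.
Qed.

Lemma cvg_expser_iC (t : R) : expser (iC R * rC t) @ \oo --> expi t.
Proof.
rewrite (funext (expser_iC t)).
apply: cvg_complex; rewrite /= unlock.
- exact: is_cvg_series_cos_coeff.
- exact: is_cvg_series_sin_coeff.
Qed.

Lemma mul_conj_expi (t : R) : cconj (expi t) * expi t = 1.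
Proof.
apply/eqP; rewrite eq_complex /=; apply/andP; split; apply/eqP; last by ring.
by rewrite mulNr opprK -!expr2 cos2Dsin2.
Qed.

End ComplexExponential.

Section Deltas.
Variable S : comPzSemiRingType.

Lemma sum_deltal (T : finType) (F : T -> S) (e : T) : \sum_(z : T) (z == e)%:R * F z = F e.
Proof. by rewrite (bigD1 e) //= eqxx mul1r big1 ?addr0 // => z /negbTE->; rewrite mul0r. Qed.

Lemma sum_deltar (T : finType) (F : T -> S) (e : T) : \sum_(z : T) F z * (z == e)%:R = F e.
Proof. by rewrite (bigD1 e) //= eqxx mulr1 big1 ?addr0 // => z /negbTE->; rewrite mulr0. Qed.

Lemma prod_eq_ffun (I : finType) (T : eqType) (z w : {ffun I -> T}) :
  \prod_(b : I) ((z b == w b)%:R : S) = (z == w)%:R.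
Proof.
case: eqP => [-> | /eqP zw]; first by rewrite big1 // => b _; rewrite eqxx.
have /existsP[b /negbTE zwb] : [exists b, z b != w b].
  by apply: contraR zw => /existsPn zw; apply/eqP/ffunP => b; apply/eqP/negPn/zw.
by rewrite (bigD1 b) //= zwb mul0r.
Qed.

Lemma prod_natb (I : finType) (P B : pred I) :
  \prod_(j | P j) ((B j)%:R : S) = [forall j, P j ==> B j]%:R.
Proof.
case: (boolP [forall j, _]) => [/forallP PB | /forallPn[j]].
  by rewrite big1 // => j Pj; rewrite (implyP (PB j) Pj).
by rewrite negb_imply => /andP[Pj /negbTE Bj]; rewrite (bigD1 j) //= Bj mul0r.
Qed.

(* [tperm a b] moves [i] iff exactly one of [a], [b] is [i], and then sends it to the other. *)
Lemma sum_transpositions n (F : 'I_n -> S) (i : 'I_n) :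
  \sum_(a < n) \sum_(b < n | (a < b)%N) ((a == i) != (b == i))%:R * F (tperm a b i) =
  \sum_(j < n | j != i) F j.
Proof.
have split_ne (a b : 'I_n) : (a < b)%N ->
    ((a == i) != (b == i))%:R = (a == i)%:R + (b == i)%:R :> S.
  move=> ab; have [ai|_] := eqVneq a i; have [bi|_] := eqVneq b i; rewrite ?addr0 ?add0r //.
  by move: ab; rewrite ai bi ltnn.
under eq_bigr do under eq_bigr => b ab do rewrite split_ne // mulrDl.
under eq_bigr do rewrite big_split /=.
rewrite big_split /=; under [X in X + _]eq_bigr do rewrite -mulr_sumr.
rewrite sum_deltal; under [X in X + _]eq_bigr do rewrite tpermL.
rewrite [X in _ + X](_ : _ = \sum_(a < n | (a < i)%N) F a); last first.
  under eq_bigr do rewrite big_mkcond /=.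
  rewrite exchange_big /= (bigD1 i) //= [X in _ + X]big1 ?addr0; last first.
    by move=> b /negbTE bi; apply: big1 => a _; rewrite bi mul0r; case: ifP.
  by rewrite [RHS]big_mkcond; apply: eq_bigr => a _; rewrite eqxx mul1r tpermR.
rewrite [RHS](bigID (fun j : 'I_n => (i < j)%N)) /=; congr (_ + _); apply: eq_bigl => j.
- by rewrite neq_ltn orbC; case: ltngtP.
- by rewrite neq_ltn; case: ltngtP.
Qed.

End Deltas.

Section Operators.
Variables (R : realType) (T : finType).
Local Notation CC := (C R).

Lemma expop_cvg (A : op R T) z z' (L : CC) :
  (fun N => \sum_(k < N) (k`!%:R)^-1 * oppow A k z z') @ \oo --> L -> expop A z z' = L.
Proof. exact: cvg_lim. Qed.

Lemma oppow_diag (H : op R T) (c : CC) k z z' : diagonal_op H ->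
  oppow (opscale c H) k z z' = (z == z')%:R * (c * H z z) ^+ k.
Proof.
move=> Hdiag; elim: k z z' => [|k IH] z z'; first by rewrite expr0 mulr1.
rewrite /= /opmul (bigD1 z) //= big1 ?addr0; last first.
  by move=> y yz; rewrite /opscale Hdiag 1?eq_sym // mulr0 mul0r.
by rewrite IH exprS /opscale; ring.
Qed.

Lemma hermitian_diag_real (H : op R T) z : hermitian_op H -> H z z = rC (complex.Re (H z z)).
Proof.
move/(_ z z); case: (H z z) => a b /= [/eqP]; rewrite -subr_eq0 opprK -mulr2n mulrn_eq0 /=.
by move/eqP->.
Qed.

Lemma expop_diag (H : op R T) (t : R) z z' : diagonal_op H -> hermitian_op H ->
  expop (opscale (- iC R * rC t) H) z z' = (z == z')%:R * expi (- (t * complex.Re (H z z))).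
Proof.
move=> Hdiag Hherm; apply: expop_cvg.
rewrite (_ : (fun N => _) = fun N => (z == z')%:R * expser (- iC R * rC t * H z z) N); last first.
  apply/funext => N; rewrite /expser mulr_sumr.
  by apply: eq_bigr => k _; rewrite oppow_diag // mulrCA.
apply: cvgM; first exact: cvg_cst.
rewrite (hermitian_diag_real _ Hherm) !rCE -mulrA -rmorphM mulNr -mulrN -rmorphN.
exact: cvg_expser_iC.
Qed.

Lemma opapp_expop_diag (H : op R T) (t : R) (v : vec R T) z : diagonal_op H -> hermitian_op H ->
  opapp (expop (opscale (- iC R * rC t) H)) v z = expi (- (t * complex.Re (H z z))) * v z.
Proof.
move=> Hdiag Hherm; rewrite /opapp -[RHS](sum_deltal (fun z' => _ * v z') z).
apply: eq_bigr => z' _; rewrite expop_diag // eq_sym mulrA.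
by case: eqP => [->|_]; rewrite ?mul0r.
Qed.

End Operators.

Section Mixer.
Variables (R : realType) (n : nat).
Local Notation CC := (C R).

Definition swap_qubits (a b : 'I_n) (z : Qb n) : Qb n := [ffun j => z (tperm a b j)].

Lemma sigXY_pair p q r s :
  sigX R p q * sigX R r s + sigY R p q * sigY R r s = ((p != q) && (r != s) && (p != r))%:R *+ 2.
Proof.
have iCiC : iC R * iC R = -1 by rewrite -expr2 iC_sqr.
by case: p; case: q; case: r; case: s;
  rewrite /sigX /sigY /= ?(mul0r, mulr0, mul1r, mulr1, addr0, add0r, mulNr, mulrN, opprK, iCiC)
          ?subrr ?mul0rn.
Qed.

Lemma onqubit_mul (a b : 'I_n) s t z' z : a != b ->
  opmul (onqubit a s) (onqubit b t) z' z =
  (\prod_(j < n | (j != a) && (j != b)) ((z' j == z j)%:R : CC)) * s (z' a) (z a) * t (z' b) (z b).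
Proof.
move=> ab; set y0 : Qb n := [ffun j => if j == a then z a else z' j].
rewrite /opmul (bigD1 y0) //= big1 ?addr0; last first.
  move=> y yy0; have /existsP[j yj] : [exists j, y j != y0 j].
    by apply: contraR yy0 => /existsPn yy0; apply/eqP/ffunP => j; apply/eqP/negPn/yy0.
  move: yj; rewrite /onqubit ffunE; have [-> | ja] := eqVneq j a => yj.
    by rewrite [X in _ * (X * _)](bigD1 a) //= (negbTE yj) !mul0r mulr0.
  by rewrite (bigD1 j) //= eq_sym (negbTE yj) mul0r !mul0r.
rewrite /onqubit big1 ?mul1r; last by move=> k ka; rewrite ffunE (negbTE ka) eqxx.
rewrite (bigD1 a) //= !ffunE eqxx [b == a]eq_sym (negbTE ab) eqxx mul1r.
rewrite (eq_bigr (fun j => (z' j == z j)%:R)); last first.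
  by move=> j /andP[_ ja]; rewrite ffunE (negbTE ja).
rewrite (eq_bigl (fun j => (j != a) && (j != b))) => [|j]; last by rewrite andbC.
by rewrite mulrCA mulrA.
Qed.

Lemma eq_swap_qubits (a b : 'I_n) (z' z : Qb n) : (z' == swap_qubits a b z) =
  [forall j, (j != a) && (j != b) ==> (z' j == z j)] && (z' a == z b) && (z' b == z a).
Proof.
apply/eqP/idP => [-> | /andP[/andP[/forallP z'z /eqP z'a] /eqP z'b]].
  rewrite !ffunE tpermL tpermR !eqxx !andbT; apply/forallP => j.
  by apply/implyP => /andP[ja jb]; rewrite ffunE tpermD 1?eq_sym.
apply/ffunP => j; rewrite ffunE; case: tpermP => [-> | -> | /eqP ja /eqP jb] //.
exact/eqP/(implyP (z'z j))/andP.
Qed.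

Lemma XXYY_entry (a b : 'I_n) (z' z : Qb n) : a != b ->
  opmul (onqubit a (sigX R)) (onqubit b (sigX R)) z' z +
  opmul (onqubit a (sigY R)) (onqubit b (sigY R)) z' z =
  ((z a != z b) && (z' == swap_qubits a b z))%:R *+ 2.
Proof.
move=> ab; rewrite !onqubit_mul // -!mulrA -mulrDr sigXY_pair prod_natb.
rewrite mulrnAr -natrM mulnb eq_swap_qubits; congr (_%:R *+ 2).
by case: [forall _, _]; case: (z a); case: (z b); case: (z' a); case: (z' b).
Qed.

Lemma ekE (k j : 'I_n) : ek k j = (j == k). Proof. by rewrite ffunE. Qed.

Lemma ek_inj : injective (@ek n).
Proof. by move=> i j /ffunP/(_ i); rewrite !ekE eqxx => /esym/eqP. Qed.

Lemma swap_qubits_ek (a b i : 'I_n) : swap_qubits a b (ek i) = ek (tperm a b i).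
Proof. by apply/ffunP => j; rewrite !ffunE; apply/eqP/eqP => [<- | ->]; rewrite tpermK. Qed.

Lemma HM_ek (z' : Qb n) (i : 'I_n) :
  @HM R n z' (ek i) = (\sum_(j < n | j != i) ((z' == ek j)%:R : CC)) *+ 2.
Proof.
rewrite -(sum_transpositions (fun j => (z' == ek j)%:R)) /HM -sumrMnl.
apply: eq_bigr => a _; rewrite -sumrMnl; apply: eq_bigr => b ab.
by rewrite XXYY_entry ?neq_ltn ?ab // swap_qubits_ek !ekE -natrM mulnb.
Qed.

End Mixer.

Section MixerExponential.
Variables (R : realType) (n : nat).
Hypothesis n_gt0 : (0 < n)%N.
Local Notation CC := (C R).

Let nC_neq0 : (n%:R : CC) != 0.
Proof. by rewrite pnatr_eq0 -lt0n. Qed.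

(* [a P + b (1 - P)] on span(e_0, ..., e_(n-1)), where P = J/n is the projector onto W_n. *)
Definition mixer_mx (a b : CC) (i l : 'I_n) : CC := (a - b) / n%:R + b * (i == l)%:R.

Lemma sum_mixer_mx (a b : CC) l : \sum_i mixer_mx a b i l = a.
Proof.
rewrite big_split /= sumr_const card_ord -[_ *+ n]mulr_natr divfK //.
by rewrite (sum_deltar (fun=> b)) subrK.
Qed.

Lemma mixer_mx_step (c a b : CC) j l :
  mixer_mx (c *+ 2 * (n%:R - 1) * a) (- (c *+ 2) * b) j l = c *+ 2 * (a - mixer_mx a b j l).
Proof. by rewrite /mixer_mx; field. Qed.

Lemma oppow_HM_ek (c : CC) k z' l :
  oppow (opscale c (@HM R n)) k z' (ek l) =
  \sum_(i < n) ket R (ek i) z' * mixer_mx ((c *+ 2 * (n%:R - 1)) ^+ k) ((- (c *+ 2)) ^+ k) i l.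
Proof.
elim: k z' => [|k IH] z'.
  rewrite /mixer_mx !expr0 subrr mul0r; under eq_bigr do rewrite add0r mul1r.
  by rewrite (sum_deltar (fun i => ket R (ek i) z')).
rewrite /= /opmul; under [LHS]eq_bigr do rewrite IH mulr_sumr.
rewrite exchange_big /=; under eq_bigr do (under eq_bigr do rewrite mulrCA; rewrite sum_deltal).
set M := mixer_mx _ _.
transitivity (\sum_(j < n) ket R (ek j) z' * (c *+ 2 * \sum_(i < n | i != j) M i l)).
  under eq_bigr do rewrite /opscale HM_ek -sumrMnl mulr_sumr mulr_suml.
  rewrite (exchange_big_dep predT) //=; apply: eq_bigr => j _; rewrite !mulr_sumr.
  rewrite (eq_bigl (fun i => i != j)) => [|i]; last by rewrite eq_sym.
  by apply: eq_bigr => i _; rewrite /ket; ring.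
apply: eq_bigr => j _; rewrite !exprS mixer_mx_step; congr (_ * (_ * _)).
rewrite -[X in X - _](sum_mixer_mx _ ((- (c *+ 2)) ^+ k) l) [in RHS](bigD1 j) //=.
by rewrite addrAC subrr add0r.
Qed.

Lemma expser_mixer_mx (x y : CC) N i l :
  \sum_(k < N) (k`!%:R)^-1 * mixer_mx (x ^+ k) (y ^+ k) i l =
  mixer_mx (expser x N) (expser y N) i l.
Proof.
rewrite /expser; elim: N => [|N IH]; first by rewrite !big_ord0 /mixer_mx subrr !mul0r addr0.
by rewrite !big_ord_recr /= IH /mixer_mx; ring.
Qed.

Lemma expop_HM_ek (t : R) j l :
  expop (opscale (- iC R * rC t) (@HM R n)) (ek j) (ek l) =
  mixer_mx (expi (- (t * 2 * (n%:R - 1)))) (expi (t * 2)) j l.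
Proof.
apply: expop_cvg; set c := - iC R * rC t.
have -> : (fun N => \sum_(k < N) k`!%:R^-1 * oppow (opscale c (@HM R n)) k (ek j) (ek l)) =
    fun N => mixer_mx (expser (c *+ 2 * (n%:R - 1)) N) (expser (- (c *+ 2)) N) j l.
  apply/funext => N; rewrite -expser_mixer_mx; apply: eq_bigr => k _.
  rewrite oppow_HM_ek /ket; under eq_bigr do rewrite (inj_eq (@ek_inj n)) eq_sym.
  by rewrite sum_deltal.
have -> : c *+ 2 * (n%:R - 1) = iC R * rC (- (t * 2 * (n%:R - 1))).
  by rewrite /c !rCE !(rmorphN, rmorphM, rmorphB, rmorph_nat, rmorph1); ring.
have -> : - (c *+ 2) = iC R * rC (t * 2).
  by rewrite /c !rCE !(rmorphN, rmorphM, rmorph_nat); ring.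
apply: cvgD; apply: cvgM; try apply: cvgB; solve [exact: cvg_expser_iC | exact: cvg_cst].
Qed.

Lemma conj_mixer_mx a b j k :
  cconj (mixer_mx a b j k) = mixer_mx (cconj a) (cconj b) j k.
Proof. by rewrite /cconj /mixer_mx !(rmorphB, rmorphD, rmorphM, fmorphV, rmorph_nat). Qed.

Lemma sum_mixer_mx_conjM a b a' b' k l :
  \sum_j cconj (mixer_mx a b j k) * mixer_mx a' b' j l =
  mixer_mx (cconj a * a') (cconj b * b') k l.
Proof.
under eq_bigr do rewrite conj_mixer_mx.
rewrite /mixer_mx; set u := (cconj a - cconj b) / n%:R; set v := (a' - b') / n%:R.
transitivity (\sum_(j < n) u * v + \sum_j (u * b') * (j == l)%:R +
    \sum_j (cconj b * v) * (j == k)%:R + \sum_j (cconj b * b' * (k == l)%:R) * (j == k)%:R).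
  rewrite -!big_split /=; apply: eq_bigr => j _.
  by case: (eqVneq j k) => [->|_]; rewrite ?mulr1 ?mulr0 ?addr0; ring.
by rewrite !sum_deltar sumr_const card_ord -mulr_natl /u /v; field.
Qed.

Lemma mixer_mx_unitary a b k l : cconj a * a = 1 -> cconj b * b = 1 ->
  \sum_j cconj (mixer_mx a b j k) * mixer_mx a b j l = (k == l)%:R.
Proof. by move=> aa bb; rewrite sum_mixer_mx_conjM aa bb /mixer_mx subrr mul0r add0r mul1r. Qed.

End MixerExponential.

Lemma exists_ge_inv_card (F : numFieldType) (T : finType) (f : T -> F) :
  (0 < #|T|)%N -> (forall t, f t \is Num.real) -> \sum_t f t = 1 ->
  exists t, #|T|%:R^-1 <= f t.
Proof.
move=> /card_gt0P[t0 _] freal f1.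
case: (boolP [exists t, #|T|%:R^-1 <= f t]) => [/existsP[t ft] | /existsPn small].
  by exists t.
have : \sum_t f t < \sum_(t : T) #|T|%:R^-1.
  apply: ltr_sum => [|t _]; first by apply/hasP; exists t0; rewrite ?mem_index_enum.
  by rewrite real_ltNge ?small ?realV ?realn.
rewrite f1 sumr_const -[_ *+ _]mulr_natr mulVf ?ltxx //.
by rewrite pnatr_eq0 -lt0n; apply/card_gt0P; exists t0.
Qed.

Section Unitarity.
Variable R : realType.
Local Notation CC := (C R).

Lemma sum_sqr_norm_unitary (I : finType) (U : I -> I -> CC) (v : I -> CC) :
  (forall w w', \sum_y cconj (U y w') * U y w = (w' == w)%:R) ->
  \sum_y `|\sum_w U y w * v w| ^+ 2 = \sum_w `|v w| ^+ 2.
Proof.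
move=> Uunit; under eq_bigr do rewrite sqr_normc rmorph_sum mulr_suml.
under [RHS]eq_bigr => w _ do rewrite sqr_normc -(sum_deltar (fun w' => v w * (v w')^*) w).
rewrite exchange_big /=; apply: eq_bigr => w _.
under eq_bigr do rewrite mulr_sumr.
rewrite exchange_big /=; apply: eq_bigr => w' _.
rewrite -Uunit mulr_sumr; apply: eq_bigr => y _.
by rewrite rmorphM /=; ring.
Qed.

Lemma tensor_unitary (J K : finType) (M : K -> K -> CC) :
  (forall k l, \sum_j cconj (M j k) * M j l = (k == l)%:R) ->
  forall w w' : {ffun J -> K}, \sum_(y : {ffun J -> K})
    cconj (\prod_b M (y b) (w b)) * \prod_b M (y b) (w' b) = (w == w')%:R.
Proof.
move=> Munit w w'; rewrite -prod_eq_ffun.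
under [RHS]eq_bigr do rewrite -Munit.
rewrite bigA_distr_bigA /=; apply: eq_bigr => y _.
by rewrite /cconj rmorph_prod -big_split.
Qed.

End Unitarity.

Section Amplitudes.
Variables (R : realType) (m n : nat).
Local Notation CC := (C R).
Local Notation label := {ffun 'I_m -> 'I_n}.

Definition onehot (x : 'I_m -> 'I_n) : Q m n := [ffun b => ek (x b)].

Lemma prodbasis_eq_onehot (x : 'I_m -> 'I_n) (z : Q m n) :
  \prod_(b < m) ket R (ek (x b)) (z b) = (z == onehot x)%:R.
Proof. by rewrite -prod_eq_ffun; apply: eq_bigr => b _; rewrite ffunE. Qed.

Lemma inner_prodbasis (x : 'I_m -> 'I_n) (v : vec R (Q m n)) :
  inner (prodbasis R x) v = v (onehot x).
Proof.
rewrite /inner -(sum_deltal v); apply: eq_bigr => z _.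
by rewrite /prodbasis /tensvec prodbasis_eq_onehot /cconj rmorph_nat.
Qed.

Lemma perm_ffun_eq_ek (p : {perm 'I_n}) (zb : Qb n) k :
  ([ffun j => zb (p j)] == ek k) = (zb == ek (p k)).
Proof.
apply/eqP/eqP => [zp | ->]; last by apply/ffunP => j; rewrite !ffunE (inj_eq (@perm_inj _ p)).
apply/ffunP => j; move/ffunP/(_ ((p^-1)%g j)): zp.
by rewrite !ffunE permKV -(inj_eq (@perm_inj _ p)) permKV.
Qed.

Lemma blockperm_adj_onehot (pi : 'I_m -> {perm 'I_n}) (x : 'I_m -> 'I_n) (v : vec R (Q m n)) :
  opapp (opadj (blockperm R pi)) v (onehot x) = v (onehot (fun b => pi b (x b))).
Proof.
rewrite /opapp -(sum_deltal v); apply: eq_bigr => z _; congr (_ * _).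
rewrite /opadj /blockperm /tensop /permop -prod_eq_ffun /cconj rmorph_prod.
by apply: eq_bigr => b _; rewrite !ffunE perm_ffun_eq_ek rmorph_nat.
Qed.

Lemma s0E (z : Q m n) :
  s0 R z = rC (Num.sqrt (n%:R : R))^-1 ^+ m * \sum_(w : label) (z == onehot w)%:R.
Proof.
rewrite /s0 /tensvec /Wn big_split /= prodr_const card_ord; congr (_ * _).
by rewrite bigA_distr_bigA; apply: eq_bigr => w _; rewrite prodbasis_eq_onehot.
Qed.

Hypothesis n_gt0 : (0 < n)%N.

Lemma UM_onehot (beta : R) (y w : 'I_m -> 'I_n) :
  UM beta (onehot y) (onehot w) =
  \prod_b mixer_mx (expi (- (beta * 2 * (n%:R - 1)))) (expi (beta * 2)) (y b) (w b).
Proof. by apply: eq_bigr => b _; rewrite !ffunE expop_HM_ek. Qed.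

Lemma QAOA_amplitude (HC : op R (Q m n)) (gamma beta : R) (y : 'I_m -> 'I_n) :
  diagonal_op HC -> hermitian_op HC ->
  opapp (UM beta) (opapp (UC HC gamma) (s0 R (m:=m) (n:=n))) (onehot y) =
  \sum_(w : label)
    (\prod_b mixer_mx (expi (- (beta * 2 * (n%:R - 1)))) (expi (beta * 2)) (y b) (w b)) *
    (rC (Num.sqrt (n%:R : R))^-1 ^+ m * expi (- (gamma * complex.Re (HC (onehot w) (onehot w))))).
Proof.
move=> HCdiag HCherm; rewrite {1}/opapp.
under eq_bigr do rewrite opapp_expop_diag // s0E !mulr_sumr.
rewrite exchange_big /=; apply: eq_bigr => w _.
under eq_bigr do rewrite !mulrA.
by rewrite sum_deltar UM_onehot; ring.
Qed.

Lemma sum_sqr_norm_s0 (E : label -> CC) : (forall w, cconj (E w) * E w = 1) ->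
  \sum_(w : label) `|rC (Num.sqrt (n%:R : R))^-1 ^+ m * E w| ^+ 2 = 1.
Proof.
move=> Eunit; have r2 : `|rC (Num.sqrt (n%:R : R))^-1| ^+ 2 = n%:R^-1.
  rewrite sqr_normc rCE conjc_real -rmorphM -expr2 exprVn sqr_sqrtr ?ler0n //.
  by rewrite fmorphV rmorph_nat.
under eq_bigr => w _ do
  rewrite normrM normrX exprMn -exprM mulnC exprM r2 sqr_normc [E w * _]mulrC Eunit mulr1.
rewrite sumr_const card_ffun !card_ord -[_ *+ _]mulr_natr natrX -exprMn mulVf ?expr1n //.
by rewrite pnatr_eq0 -lt0n.
Qed.

End Amplitudes.

Theorem mainTheorem9 (R : realType) (n m : nat) (hn : (2 <= n)%N) (hm : (1 <= m)%N)
  (HC : op R (Q m n)) (hdiag : diagonal_op HC) (hherm : hermitian_op HC)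
  (xstar : 'I_m -> 'I_n) (gamma beta : R) :
  exists pi : 'I_m -> {perm 'I_n},
    ((n ^ m)%:R)^-1 <=
    `| inner (prodbasis R xstar)
         (opapp (opadj (blockperm R pi))
            (opapp (UM (R:=R) (m:=m) (n:=n) beta)
               (opapp (UC HC gamma) (s0 R (m:=m) (n:=n))))) | ^+ 2.
Proof.
have n_gt0 : (0 < n)%N by apply: leq_trans hn.
set psi := opapp (UM beta) (opapp (UC HC gamma) (s0 R (m:=m) (n:=n))).
have psi_norm : \sum_(y : {ffun 'I_m -> 'I_n}) `|psi (onehot y)| ^+ 2 = 1.
  under eq_bigr do rewrite /psi QAOA_amplitude //.
  rewrite sum_sqr_norm_unitary ?sum_sqr_norm_s0 // => [w|w w'].
    exact: mul_conj_expi.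
  by apply/tensor_unitary => k l; apply: mixer_mx_unitary; rewrite ?mul_conj_expi.
have [|y|y] := exists_ge_inv_card _ _ psi_norm.
- by rewrite card_ffun !card_ord expn_gt0 n_gt0.
- by rewrite realX ?normr_real.
rewrite card_ffun !card_ord => psi_y; exists (fun b => tperm (xstar b) (y b)).
rewrite inner_prodbasis blockperm_adj_onehot.
suff -> : onehot (fun b => tperm (xstar b) (y b) (xstar b)) = onehot y by [].
by apply/ffunP => b; rewrite !ffunE tpermL.
Qed.
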